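(* Let $M\in\Lambda$ and $A\in\mathcal A$. (1) If $A\sqsubseteq M$ then $\mathcal T_n(A)\subseteq\mathrm{NF}(\mathcal T(M))$. (2) If $\mathcal T_n(A)\subseteq\mathcal T_n(\mathrm{BT}(M))$ then $A\in\mathcal A(M)$, where $\mathcal T_n(\mathrm{BT}(M))=\bigcup_{A'\in\mathcal A(M)}\mathcal T_n(A')$.
   Context: $\lambda$-terms and values are $M,N::=V\mid MN$, $V::=x\mid\lambda x.M$, up to $\alpha$-conversion. Rules: $(\beta_v)$ $(\lambda x.M)V\to M\{x:=V\}$ if $V$ is a value; $(\sigma_1)$ $(\lambda x.M)NP\to(\lambda x.MP)N$ if $x\notin\mathrm{FV}(P)$; $(\sigma_3)$ $V((\lambda x.M)N)\to(\lambda x.VM)N$ if $V$ is a value and $x\notin\mathrm{FV}(V)$; $\to_{\mathsf v}$ is their contextual closure, $\twoheadrightarrow_{\mathsf v}$ its reflexive-transitive closure. Approximants: $\Lambda_\bot$ is the set of $\lambda$-terms possibly containing a constant $\bot$; $\sqsubseteq$ is the smallest context-closed preorder on $\Lambda_\bot$ with $\bot\sqsubseteq x$, $\bot\sqsubseteq\lambda x.M$. Approximants $\mathcal A$ ($k\ge0$): $A::=B\mid C$; $B::=x\mid\lambda x.A\mid\bot\mid xBA_1\cdots A_k$; $C::=(\lambda x.A)(yBA_1\cdots A_k)$. $\mathcal A(M)=\{A\in\mathcal A\mid\exists N\in\Lambda,\ M\twoheadrightarrow_{\mathsf v}N,\ A\sqsubseteq N\}$. Resource calculus: resource values $v::=x\mid\lambda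 x.t$; simple terms $s,t::=st\mid[v_1,\dots,v_k]$ (bags are finite multisets); $[x^n]$ is $n$ copies of $x$. Linear substitution $e\langle x:=v_1,\dots,v_n\rangle$ is the set of terms obtained by replacing the $n$ free occurrences of $x$ in $e$ bijectively by $v_1,\dots,v_n$ (all permutations), or $\emptyset$ if $x$ does not occur exactly $n$ times free. Constructors extend multilinearly to sets. Rules: $(\beta_r)$ $[\lambda x.t][v_1,\dots,v_n]\to t\langle x:=v_1,\dots,v_n\rangle$; $(0)$ $[v_1,\dots,v_n]t\to\emptyset$ if $n\ne1$; $(\sigma_1)$ $[\lambda x.t]s_1s_2\to[\lambda x.ts_2]s_1$ if $x\notin\mathrm{FV}(s_1)$; $(\sigma_3)$ $[v]([\lambda x.t]s)\to[\lambda x.[v]t]s$ if $x\notin\mathrm{FV}(v)$. $\to_{\mathsf r}$ is the closure of these rules under abstraction, both sides of application, elements of bags, and on finite sets ($e\to\mathcal E_1$, $e\notin\mathcal E_2$ imply $\{e\}\cup\mathcal E_2\to\mathcal E_1\cup\mathcal E_2$); it is confluent and strongly normalizing, $\mathrm{nf}(e)$ is the normal form and $\mathrm{NF}(\mathcal E)=\bigcup_{e\in\mathcal E}\mathrm{nf}(e)$. Taylor expansion: $\mathcal T(x)=\{[x^n]\mid n\ge0\}$, $\mathcal T(\lambda x.N)=\{[\lambda x.t_1,\dots,\lambda x.t_n]\mid n\ge0,\ t_i\in\mathcal T(N)\}$, $\mathcal T(PQ)=\{st\mid s\in\mathcal T(P),t\in\mathcal T(Q)\}$. Normalized Taylor expansion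 of approximants: $\mathcal T_n(x)=\{[x^n]\mid n\ge0\}$; $\mathcal T_n(\lambda x.A')=\{[\lambda x.t_1,\dots,\lambda x.t_n]\mid n\ge0,\ t_i\in\mathcal T_n(A')\}$; $\mathcal T_n(\bot)=\{[\,]\}$; $\mathcal T_n(xBA_1\cdots A_k)=\{[x]t_0t_1\cdots t_k\mid t_0\in\mathcal T_n(B),\ t_i\in\mathcal T_n(A_i)\}$; $\mathcal T_n((\lambda x.A')(yBA_1\cdots A_k))=\{[\lambda x.s]t\mid s\in\mathcal T_n(A'),\ t\in\mathcal T_n(yBA_1\cdots A_k)\}$. *)

(* Lambda-terms are represented with de Bruijn indices
   (this realizes "up to alpha-conversion"); resource bags are lists,
   considered up to permutation via the congruence [req] below. *)
From Stdlib Require Import List Permutation Arith Relations.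
Import ListNotations.

Inductive lam : Type :=
| Var (n : nat)
| Lam (M : lam)
| App (M N : lam).

Fixpoint lift (c : nat) (M : lam) : lam :=
  match M with
  | Var n => if n <? c then Var n else Var (S n)
  | Lam M => Lam (lift (S c) M)
  | App M N => App (lift c M) (lift c N)
  end.

(* M{k := V}: capture-avoiding substitution of V for index k
   (indices above k are decremented, as the binder disappears) *)
Fixpoint subst (k : nat) (V : lam) (M : lam) : lam :=
  match M with
  | Var n => if n =? k then V else if n <? k then Var n else Var (pred n)
  | Lam M => Lam (subst (S k) (lift 0 V) M)
  | App M N => App (subst k V M) (subst k V N)
  end.

Definition is_value (M : lam) : Prop :=
  match M with Var _ | Lam _ => True | App _ _ => False end.

(* contextual closure of beta_v, sigma_1, sigma_3 ; the freshness side
   conditions are automatic with de Bruijn indices (lifting) *)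
Inductive vstep : lam -> lam -> Prop :=
| vs_beta M V : is_value V -> vstep (App (Lam M) V) (subst 0 V M)
| vs_sigma1 M N P :
    vstep (App (App (Lam M) N) P) (App (Lam (App M (lift 0 P))) N)
| vs_sigma3 V M N : is_value V ->
    vstep (App V (App (Lam M) N)) (App (Lam (App (lift 0 V) M)) N)
| vs_lam M M' : vstep M M' -> vstep (Lam M) (Lam M')
| vs_appl M M' N : vstep M M' -> vstep (App M N) (App M' N)
| vs_appr M N N' : vstep N N' -> vstep (App M N) (App M N').

Definition vred : lam -> lam -> Prop := clos_refl_trans lam vstep.

Inductive lamb : Type :=
| BVar (n : nat)
| BLam (M : lamb)
| BApp (M N : lamb)
| Bot.

Fixpoint emb (M : lam) : lamb :=
  match M with
  | Var n => BVar n
  | Lam M => BLam (emb M)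
  | App M N => BApp (emb M) (emb N)
  end.

Inductive approx : lamb -> lamb -> Prop :=
| ap_refl M : approx M M
| ap_trans M N P : approx M N -> approx N P -> approx M P
| ap_bot_var x : approx Bot (BVar x)
| ap_bot_lam M : approx Bot (BLam M)
| ap_lam M M' : approx M M' -> approx (BLam M) (BLam M')
| ap_appl M M' N : approx M M' -> approx (BApp M N) (BApp M' N)
| ap_appr M N N' : approx N N' -> approx (BApp M N) (BApp M N').

(* approximants:  A ::= B | C ;  B ::= x | λx.A | ⊥ | x B A1..Ak ;
   C ::= (λx.A)(y B A1..Ak).  [isNeu] is the shape  x B A1 .. Ak. *)
Inductive isA : lamb -> Prop :=
| A_B b : isB b -> isA b
| A_C a n : isA a -> isNeu n -> isA (BApp (BLam a) n)
with isB : lamb -> Prop :=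
| B_var x : isB (BVar x)
| B_lam a : isA a -> isB (BLam a)
| B_bot : isB Bot
| B_neu n : isNeu n -> isB n
with isNeu : lamb -> Prop :=
| N_head x b : isB b -> isNeu (BApp (BVar x) b)
| N_app n a : isNeu n -> isA a -> isNeu (BApp n a).

Definition inApprox (A : lamb) (M : lam) : Prop :=
  isA A /\ exists N : lam, vred M N /\ approx A (emb N).

Inductive rterm : Type :=
| RApp (s t : rterm)
| RBag (b : list rval)
with rval : Type :=
| RVar (n : nat)
| RLam (t : rterm).

Fixpoint rlift_t (c : nat) (t : rterm) : rterm :=
  match t with
  | RApp s u => RApp (rlift_t c s) (rlift_t c u)
  | RBag b => RBag ((fix go (b : list rval) : list rval :=
                       match b with [] => [] | v :: b => rlift_v c v :: go b end) b)
  end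
with rlift_v (c : nat) (v : rval) : rval :=
  match v with
  | RVar n => if n <? c then RVar n else RVar (S n)
  | RLam t => RLam (rlift_t (S c) t)
  end.

Inductive req : rterm -> rterm -> Prop :=
| req_refl t : req t t
| req_sym t u : req t u -> req u t
| req_trans t u w : req t u -> req u w -> req t w
| req_app s s' t t' : req s s' -> req t t' -> req (RApp s t) (RApp s' t')
| req_perm b b' : Permutation b b' -> req (RBag b) (RBag b')
| req_elem b1 v v' b2 : reqv v v' -> req (RBag (b1 ++ v :: b2)) (RBag (b1 ++ v' :: b2))
with reqv : rval -> rval -> Prop :=
| reqv_var n : reqv (RVar n) (RVar n)
| reqv_lam t t' : req t t' -> reqv (RLam t) (RLam t').

(* linear substitution:  lsub_t k vs e e'  iff  e' is one of the terms of
   e<k := vs> : the occurrences of index k in e are replaced bijectively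
   (in all possible ways, via the permutations) by the values of vs
   (which live in the outer context and are lifted under binders); the
   relation is empty unless k occurs exactly |vs| times free in e. *)
Inductive lsub_t : nat -> list rval -> rterm -> rterm -> Prop :=
| ls_app k vs vs1 vs2 s t s' t' :
    Permutation vs (vs1 ++ vs2) -> lsub_t k vs1 s s' -> lsub_t k vs2 t t' ->
    lsub_t k vs (RApp s t) (RApp s' t')
| ls_bag k vs b b' : lsub_b k vs b b' -> lsub_t k vs (RBag b) (RBag b')
with lsub_b : nat -> list rval -> list rval -> list rval -> Prop :=
| lsb_nil k : lsub_b k [] [] []
| lsb_cons k vs vs1 vs2 v v' b b' :
    Permutation vs (vs1 ++ vs2) -> lsub_v k vs1 v v' -> lsub_b k vs2 b b' ->
    lsub_b k vs (v :: b) (v' :: b')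
with lsub_v : nat -> list rval -> rval -> rval -> Prop :=
| lsv_hit k v : lsub_v k [v] (RVar k) v
| lsv_lt k n : n < k -> lsub_v k [] (RVar n) (RVar n)
| lsv_gt k n : k < n -> lsub_v k [] (RVar n) (RVar (pred n))
| lsv_lam k vs t t' :
    lsub_t (S k) (List.map (rlift_v 0) vs) t t' -> lsub_v k vs (RLam t) (RLam t').

(* one reduction step  e -> E  with E a (finite) set of simple terms,
   represented as a predicate; closure under abstraction, both sides of
   application and bag elements, extended multilinearly. *)
Inductive rstep : rterm -> (rterm -> Prop) -> Prop :=
| r_beta t vs : rstep (RApp (RBag [RLam t]) (RBag vs)) (fun u => lsub_t 0 vs t u)
| r_zero b t : length b <> 1 -> rstep (RApp (RBag b) t) (fun _ => False)
| r_sigma1 t s1 s2 :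
    rstep (RApp (RApp (RBag [RLam t]) s1) s2)
          (eq (RApp (RBag [RLam (RApp t (rlift_t 0 s2))]) s1))
| r_sigma3 v t s :
    rstep (RApp (RBag [v]) (RApp (RBag [RLam t]) s))
          (eq (RApp (RBag [RLam (RApp (RBag [rlift_v 0 v]) t)]) s))
| r_appl s t S : rstep s S -> rstep (RApp s t) (fun u => exists s', S s' /\ u = RApp s' t)
| r_appr s t T : rstep t T -> rstep (RApp s t) (fun u => exists t', T t' /\ u = RApp s t')
| r_bag b1 v b2 V : rvstep v V ->
    rstep (RBag (b1 ++ v :: b2)) (fun u => exists v', V v' /\ u = RBag (b1 ++ v' :: b2))
with rvstep : rval -> (rval -> Prop) -> Prop :=
| rv_lam t T : rstep t T -> rvstep (RLam t) (fun w => exists t', T t' /\ w = RLam t').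

Definition rnormal (e : rterm) : Prop := forall E, ~ rstep e E.

(* nf e u : u belongs to the normal form nf(e).  Reduction is confluent
   and strongly normalizing, so nf(e) = NF(E) for any step e -> E;
   we take the union over all reduction paths, which is nf(e). *)
Inductive nf : rterm -> rterm -> Prop :=
| nf_refl e : rnormal e -> nf e e
| nf_step e E e' u : rstep e E -> E e' -> nf e' u -> nf e u.

Definition NF (E : rterm -> Prop) : rterm -> Prop :=
  fun u => exists e, E e /\ nf e u.

Inductive Tay : lam -> rterm -> Prop :=
| T_var x n : Tay (Var x) (RBag (repeat (RVar x) n))
| T_lam N ts : Forall (Tay N) ts -> Tay (Lam N) (RBag (List.map RLam ts))
| T_app P Q s t : Tay P s -> Tay Q t -> Tay (App P Q) (RApp s t).

Inductive Tn : lamb -> rterm -> Prop :=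
| Tn_var x n : Tn (BVar x) (RBag (repeat (RVar x) n))
| Tn_lam A ts : Forall (Tn A) ts -> Tn (BLam A) (RBag (List.map RLam ts))
| Tn_bot : Tn Bot (RBag [])
| Tn_head x B t0 : Tn B t0 -> Tn (BApp (BVar x) B) (RApp (RBag [RVar x]) t0)
| Tn_neu P Q A s t : Tn (BApp P Q) s -> Tn A t -> Tn (BApp (BApp P Q) A) (RApp s t)
| Tn_redex A N s t : Tn A s -> Tn N t -> Tn (BApp (BLam A) N) (RApp (RBag [RLam s]) t).

Definition TnBT (M : lam) : rterm -> Prop :=
  fun t => exists A', inApprox A' M /\ Tn A' t.

Definition rincl (P Q : rterm -> Prop) : Prop :=
  forall t, P t -> exists t', Q t' /\ req t t'.

(* (1) If A ⊑ M, every element of T_n(A) already belongs to T(M), ⊥ being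
   expanded as the empty bag. An approximant contains no redex and every
   abstraction in it is applied to a neutral term, so these simple terms are
   normal, hence their own normal forms.
   (2) Expanding A with singleton bags only yields an element of T_n(A) that
   determines A: its skeleton, invariant under permutation of bags, is matched
   by an element of T_n(A') only when A ⊑ A'. Taking A' ∈ 𝒜(M) gives
   A ⊑ A' ⊑ N for a reduct N of M. *)
From Stdlib Require Import List Permutation Lia.
Import ListNotations.

Inductive approx_struct : lamb -> lamb -> Prop :=
| as_bot_bot : approx_struct Bot Bot
| as_bot_var x : approx_struct Bot (BVar x)
| as_bot_lam M : approx_struct Bot (BLam M)
| as_var x : approx_struct (BVar x) (BVar x)
| as_lam M M' : approx_struct M M' -> approx_struct (BLam M) (BLam M')
| as_app M M' N N' :
    approx_struct M M' -> approx_struct N N' -> approx_struct (BApp M N) (BApp M' N').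

Lemma approx_struct_refl M : approx_struct M M.
Proof. induction M; constructor; auto. Qed.

Lemma approx_struct_trans M N P :
  approx_struct M N -> approx_struct N P -> approx_struct M P.
Proof.
  intros H; revert P; induction H; intros P' H'; inversion H'; subst; constructor; auto.
Qed.

Lemma approx_struct_iff M N : approx M N <-> approx_struct M N.
Proof.
  split; induction 1;
    try solve [constructor; auto using approx_struct_refl
              | eauto using approx_struct_refl, approx_struct_trans | apply ap_refl].
  eapply ap_trans; [apply ap_appl | apply ap_appr]; eassumption.
Qed.

Lemma isA_lam_inv a : isA (BLam a) -> isA a.
Proof.
  intros H; inversion H as [? HB|]; inversion HB as [| | | ? HN]; subst; auto.
  inversion HN.
Qed.

Lemma isA_of_isNeu N : isNeu N -> isA N.
Proof. intros; apply A_B, B_neu; assumption. Qed.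

Lemma isNeu_app_inv P Q : isNeu (BApp P Q) ->
  (exists x, P = BVar x /\ isB Q) \/ (isNeu P /\ isA Q).
Proof. intros H; inversion H; subst; eauto. Qed.

Lemma isA_app_inv P Q : isA (BApp P Q) ->
  (exists a, P = BLam a /\ isA a /\ isNeu Q) \/ isNeu (BApp P Q).
Proof. intros H; inversion H as [? HB|]; subst; eauto. inversion HB; auto. Qed.

Lemma isA_head_inv x B : isA (BApp (BVar x) B) -> isB B.
Proof.
  intros H; destruct (isA_app_inv _ _ H) as [[? [[=] _]] | HN].
  destruct (isNeu_app_inv _ _ HN) as [[? [_ ?]] | [HV _]]; [assumption | inversion HV].
Qed.

Lemma isA_neu_inv P Q R : isA (BApp (BApp P Q) R) -> isNeu (BApp P Q) /\ isA R.
Proof.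
  intros H; destruct (isA_app_inv _ _ H) as [[? [[=] _]] | HN].
  destruct (isNeu_app_inv _ _ HN) as [[? [[=] _]] | ?]; assumption.
Qed.

Lemma isA_redex_inv a N : isA (BApp (BLam a) N) -> isA a /\ isNeu N.
Proof.
  intros H; destruct (isA_app_inv _ _ H) as [[? [[= ->] ?]] | HN]; [tauto|].
  destruct (isNeu_app_inv _ _ HN) as [[? [[=] _]] | [HL _]]; inversion HL.
Qed.

Lemma isB_not_redex a N : ~ isB (BApp (BLam a) N).
Proof.
  intros H; inversion H as [| | | ? HN]; subst.
  destruct (isNeu_app_inv _ _ HN) as [[? [[=] _]] | [HL _]]; inversion HL.
Qed.

Lemma Tn_BApp_inv P Q t :
  Tn (BApp P Q) t -> exists s u, t = RApp s u /\ Tn P s /\ Tn Q u.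
Proof.
  intros H; inversion H as [| | | x B u HB | P' Q' R s u HPQ HR | a N s u Ha HN];
    subst; do 2 eexists; (split; [reflexivity|]).
  - split; [exact (Tn_var x 1) | exact HB].
  - split; assumption.
  - split; [exact (Tn_lam a [s] (Forall_cons _ Ha (Forall_nil _))) | exact HN].
Qed.

Lemma Tn_RApp_inv A s u :
  Tn A (RApp s u) -> exists P Q, A = BApp P Q /\ Tn P s /\ Tn Q u.
Proof.
  intros H; inversion H as [| | | x B u' HB | P Q R s' u' HPQ HR | a N s' u' Ha HN];
    subst; do 2 eexists; (split; [reflexivity|]).
  - split; [exact (Tn_var x 1) | exact HB].
  - split; assumption.
  - split; [exact (Tn_lam a [s'] (Forall_cons _ Ha (Forall_nil _))) | exact HN].
Qed.

Lemma Tn_singleton_bag_inv A v : Tn A (RBag [v]) ->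
  (exists x, A = BVar x /\ v = RVar x) \/
  (exists a s, A = BLam a /\ v = RLam s /\ Tn a s).
Proof.
  intros H; inversion H as [x n | a ts Hts | | | |]; subst;
    [destruct n as [|[|]] | destruct ts as [|s [|]]]; simpl in *; try discriminate.
  - left; exists x; split; congruence.
  - right; exists a, s; inversion Hts; repeat split; congruence.
Qed.

Lemma Tn_bag_approx_bot A b : Tn A (RBag b) -> approx_struct Bot A.
Proof. intros H; inversion H; constructor. Qed.

Definition is_bag (t : rterm) : Prop := exists b, t = RBag b.

Definition rlam_app (t : rterm) : Prop := exists s u, t = RApp (RBag [RLam s]) u.

Lemma Tn_rlam_app_inv A t :
  Tn A t -> rlam_app t -> exists a N, A = BApp (BLam a) N.
Proof.
  intros H [s [u ->]].
  destruct (Tn_RApp_inv _ _ _ H) as [P [Q [-> [HP _]]]].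
  destruct (Tn_singleton_bag_inv _ _ HP) as [[x [_ [=]]] | [a [s' [-> _]]]]; eauto.
Qed.

Lemma Tn_isB_not_rlam_app A t : isB A -> Tn A t -> ~ rlam_app t.
Proof.
  intros HB HT Hr.
  destruct (Tn_rlam_app_inv _ _ HT Hr) as [a [N ->]]; exact (isB_not_redex _ _ HB).
Qed.

Lemma Tn_isNeu_not_bag N t : isNeu N -> Tn N t -> ~ is_bag t.
Proof.
  intros HN HT [b ->]; inversion HN; subst;
    destruct (Tn_BApp_inv _ _ _ HT) as [? [? [[=] _]]].
Qed.

Lemma rnormal_bag b : (forall t, In (RLam t) b -> rnormal t) -> rnormal (RBag b).
Proof.
  intros H E HS; inversion HS as [| | | | | | b1 v b2 V HV]; subst.
  inversion HV as [t T Ht]; subst.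
  apply (H t (in_elt _ _ _) T Ht).
Qed.

Lemma rnormal_app_nonbag s u :
  rnormal s -> rnormal u -> ~ is_bag s -> ~ rlam_app s -> rnormal (RApp s u).
Proof.
  intros Hs Hu Hb Hl E HS; inversion HS; subst;
    solve [eapply Hb; eexists; reflexivity | eapply Hl; do 2 eexists; reflexivity
          | eapply Hs; eauto | eapply Hu; eauto].
Qed.

Lemma rnormal_app_singleton v u :
  rnormal (RBag [v]) -> rnormal u -> ~ rlam_app u ->
  (forall t, v = RLam t -> ~ is_bag u) -> rnormal (RApp (RBag [v]) u).
Proof.
  intros Hv Hu Hl Hb E HS; inversion HS; subst.
  - eapply Hb; [reflexivity | eexists; reflexivity].
  - auto.
  - eapply Hl; do 2 eexists; reflexivity.
  - eapply Hv; eauto.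
  - eapply Hu; eauto.
Qed.

Lemma Tn_rnormal A : isA A -> forall t, Tn A t -> rnormal t.
Proof.
  induction A as [x | a IHa | P IHP Q IHQ |]; intros HA t HT;
    inversion HT as [? n | ? ts Hts | | y B u HQ | P' Q' R s u HPs HQu
                     | a' N s u Has HQu]; subst.
  - apply rnormal_bag; intros t Hin; apply repeat_spec in Hin; discriminate.
  - apply rnormal_bag; intros t Hin; apply in_map_iff in Hin as [t' [[= <-] Hin]].
    apply (IHa (isA_lam_inv _ HA)); eapply Forall_forall; eassumption.
  - pose proof (isA_head_inv _ _ HA) as HB.
    apply rnormal_app_singleton.
    + apply rnormal_bag; intros ? [[=] | []].
    + exact (IHQ (A_B _ HB) _ HQ).
    + exact (Tn_isB_not_rlam_app _ _ HB HQ).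
    + discriminate.
  - destruct (isA_neu_inv _ _ _ HA) as [HN HR].
    apply rnormal_app_nonbag.
    + exact (IHP (isA_of_isNeu _ HN) _ HPs).
    + exact (IHQ HR _ HQu).
    + exact (Tn_isNeu_not_bag _ _ HN HPs).
    + exact (Tn_isB_not_rlam_app _ _ (B_neu _ HN) HPs).
  - destruct (isA_redex_inv _ _ HA) as [Ha HN].
    apply rnormal_app_singleton.
    + apply (IHP (A_B _ (B_lam _ Ha))), (Tn_lam _ [_]); auto.
    + exact (IHQ (isA_of_isNeu _ HN) _ HQu).
    + exact (Tn_isB_not_rlam_app _ _ (B_neu _ HN) HQu).
    + intros _ _; exact (Tn_isNeu_not_bag _ _ HN HQu).
  - apply rnormal_bag; intros _ [].
Qed.

Lemma Tn_Tay M A t : approx_struct A (emb M) -> Tn A t -> Tay M t.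
Proof.
  revert A t; induction M as [x | M IHM | M1 IHM1 M2 IHM2]; intros A t Hle HT;
    inversion Hle; subst.
  - inversion HT; exact (T_var x 0).
  - inversion HT; constructor.
  - inversion HT; exact (T_lam M [] (Forall_nil _)).
  - inversion HT; subst; constructor.
    eapply Forall_impl; [|eassumption]; eauto.
  - destruct (Tn_BApp_inv _ _ _ HT) as [s [u [-> [Hs Hu]]]]; constructor; eauto.
Qed.

Fixpoint singleton_expansion (A : lamb) : rterm :=
  match A with
  | BVar x => RBag [RVar x]
  | BLam a => RBag [RLam (singleton_expansion a)]
  | Bot => RBag []
  | BApp P Q => RApp (singleton_expansion P) (singleton_expansion Q)
  end.

Lemma Tn_singleton_expansion A : isA A -> Tn A (singleton_expansion A).
Proof.
  induction A as [x | a IHa | P IHP Q IHQ |]; intros HA; simpl.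
  - exact (Tn_var x 1).
  - apply (Tn_lam a [_]); auto using isA_lam_inv.
  - destruct P as [x | a | P1 P2 |]; simpl.
    + apply Tn_head, IHQ, A_B, (isA_head_inv _ _ HA).
    + destruct (isA_redex_inv _ _ HA) as [Ha HN].
      apply Tn_redex; [|auto using isA_of_isNeu].
      destruct (Tn_singleton_bag_inv _ _ (IHP (A_B _ (B_lam _ Ha))))
        as [[? [[=] _]] | [? [? [[= <-] [[= <-] ?]]]]].
      assumption.
    + destruct (isA_neu_inv _ _ _ HA) as [HN HR].
      apply Tn_neu; auto using isA_of_isNeu.
    + destruct (isA_app_inv _ _ HA) as [[? [[=] _]] | HN].
      destruct (isNeu_app_inv _ _ HN) as [[? [[=] _]] | [HB _]]; inversion HB.
  - constructor.
Qed.

(* Bags with two or more elements are collapsed, which makes the skeleton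
   invariant under permutation; singleton expansions contain no such bag. *)
Inductive rskel : Type :=
| SkApp (k l : rskel) | SkEmpty | SkVar (n : nat) | SkLam (k : rskel) | SkMany.

Fixpoint skel (t : rterm) : rskel :=
  match t with
  | RApp s u => SkApp (skel s) (skel u)
  | RBag [] => SkEmpty
  | RBag [RVar n] => SkVar n
  | RBag [RLam t] => SkLam (skel t)
  | RBag _ => SkMany
  end.

Lemma skel_many b : 2 <= length b -> skel (RBag b) = SkMany.
Proof. destruct b as [|v [|w b]]; simpl; intros; try lia; destruct v; reflexivity. Qed.

Scheme req_mut := Induction for req Sort Prop
  with reqv_mut := Induction for reqv Sort Prop.

Lemma req_skel t u : req t u -> skel t = skel u.
Proof.
  revert t u.
  apply (req_mut (fun t u _ => skel t = skel u)
                 (fun v v' _ => skel (RBag [v]) = skel (RBag [v'])));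
    intros; try (simpl; congruence).
  - destruct b as [|v [|w b]].
    + apply Permutation_nil in p; subst; reflexivity.
    + apply Permutation_length_1_inv in p; subst; reflexivity.
    + apply Permutation_length in p.
      rewrite !skel_many; simpl in *; first [reflexivity | lia].
  - destruct b1 as [|x b1]; [destruct b2 as [|y b2]|]; [simpl; assumption | |];
      rewrite !skel_many; rewrite ?length_app; simpl; first [reflexivity | lia].
Qed.

Lemma skel_Tn_approx A A' t :
  Tn A' t -> skel t = skel (singleton_expansion A) -> approx_struct A A'.
Proof.
  revert A' t; induction A as [x | a IHa | P IHP Q IHQ |]; intros A' t HT Hsk;
    simpl in Hsk.
  - destruct t as [s u | [|[n | s] [|]]]; simpl in Hsk; try discriminate.
    injection Hsk as ->.
    destruct (Tn_singleton_bag_inv _ _ HT) as [[? [-> [= ->]]] | [? [? [_ [[=] _]]]]].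
    constructor.
  - destruct t as [s u | [|[n | s] [|]]]; simpl in Hsk; try discriminate.
    injection Hsk as Hsk.
    destruct (Tn_singleton_bag_inv _ _ HT) as [[? [_ [=]]] | [a' [? [-> [[= <-] Ha']]]]].
    constructor; eauto.
  - destruct t as [s u|]; simpl in Hsk; [|destruct b as [|[] [|]]; discriminate].
    injection Hsk as Hs Hu.
    destruct (Tn_RApp_inv _ _ _ HT) as [P' [Q' [-> [HP HQ]]]].
    constructor; eauto.
  - destruct t as [| b]; simpl in Hsk; [discriminate|].
    eapply Tn_bag_approx_bot; eassumption.
Qed.

Theorem lemma4p10 (M : lam) (A : lamb) (HA : isA A) :
  (approx A (emb M) -> rincl (Tn A) (NF (Tay M))) /\
  (rincl (Tn A) (TnBT M) -> inApprox A M).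
Proof.
  split.
  - intros Hap t HT.
    apply approx_struct_iff in Hap.
    exists t; split; [|apply req_refl].
    exists t; split; [eapply Tn_Tay; eassumption|].
    apply nf_refl, (Tn_rnormal A HA t HT).
  - intros Hincl.
    destruct (Hincl _ (Tn_singleton_expansion A HA))
      as [t' [[A' [[_ [N [Hred HA'N]]] HT']] Hreq]].
    split; [assumption|].
    exists N; split; [assumption|].
    apply (ap_trans _ A'); [|assumption].
    apply approx_struct_iff, (skel_Tn_approx _ _ t' HT').
    symmetry; apply req_skel, Hreq.
Qed.
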